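(* Let $\mathfrak g$ be a nilpotent Lie algebra of nilindex $4$ (i.e. $\mathfrak g^4=0$) over a field of characteristic zero, and let $R:\mathfrak g\to\mathfrak g$ be a Rota–Baxter operator of weight 1 with $R(\mathfrak g^i)\subset\mathfrak g^i$ for $i=2,3$. Then the map $$\mathfrak R(x)=R(x)-\tfrac12R([R(x),x])+\tfrac1{12}R\big([[R(x),x],x]+[R(x),[R(x),x]]\big)+\tfrac14R\big([R([R(x),x]),x]\big),\qquad x\in\mathfrak g,$$ is a Rota–Baxter operator on the group $(\mathfrak g,* )$.
   Context: $\mathfrak g^1=\mathfrak g$, $\mathfrak g^n=[\mathfrak g,\mathfrak g^{n-1}]$. Rota–Baxter operator of weight 1 on a Lie algebra: linear $R$ with $[R(x),R(y)]=R([R(x),y]+[x,R(y)]+[x,y])$. The group $(\mathfrak g,* )$ is $\mathfrak g$ with the Baker–Campbell–Hausdorff product $x*y=\log(\exp(x)\exp(y))$ (computed in the completion of $U(\mathfrak g)$ with respect to the filtration induced by $\mathcal F_n\mathfrak g=\mathfrak g^n$; since $\mathfrak g$ is nilpotent this is a finite Lie polynomial in $x,y$). A Rota–Baxter operator on a group $G$ is a map $\mathfrak R:G\to G$ with $\mathfrak R(g)\mathfrak R(h)=\mathfrak R(g\mathfrak R(g)h\mathfrak R(g)^{-1})$ for all $g,h$. *)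

From HB Require Import structures.
From mathcomp Require Import all_boot all_order all_algebra.
Set Implicit Arguments. Unset Strict Implicit. Unset Printing Implicit Defensive.
Import GRing.Theory.
Local Open Scope ring_scope.

Section Lie.
Variables (K : fieldType) (V : lmodType K) (br : V -> V -> V).

Definition lie_bracket : Prop :=
  [/\ (forall (a : K) (x y z : V), br (a *: x + y) z = a *: br x z + br y z),
      (forall (a : K) (x y z : V), br x (a *: y + z) = a *: br x y + br x z),
      (forall x : V, br x x = 0) &
      (forall x y z : V, br x (br y z) + br y (br z x) + br z (br x y) = 0)].

(* Lower central series: lcs n x <-> x \in g^n, with g^1 = g and
   g^(n+1) = [g, g^n] (the linear span of brackets [a,b], b \in g^n). *)
Inductive lcs : nat -> V -> Prop :=
| lcs_one x : lcs 1 x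
| lcs_br n a b : lcs n b -> lcs n.+1 (br a b)
| lcs_zero n : lcs n.+1 0
| lcs_add n x y : lcs n.+1 x -> lcs n.+1 y -> lcs n.+1 (x + y)
| lcs_scale n (k : K) x : lcs n.+1 x -> lcs n.+1 (k *: x).

Definition linear_map (R : V -> V) : Prop :=
  forall (a : K) (x y : V), R (a *: x + y) = a *: R x + R y.

Definition rota_baxter1 (R : V -> V) : Prop :=
  forall x y : V, br (R x) (R y) = R (br (R x) y + br x (R y) + br x y).

(* The Baker--Campbell--Hausdorff product, truncated after degree 3.
   When g^4 = 0 all BCH terms of degree >= 4 are iterated brackets of
   length >= 4, hence lie in g^4 = 0, so this is exactly log(exp x exp y). *)
Definition bch (x y : V) : V :=
  x + y + 2%:R^-1 *: br x y
    + 12%:R^-1 *: (br x (br x y) + br y (br y x)).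

Definition ginv (x : V) : V := - x.

Definition group_rota_baxter (RR : V -> V) : Prop :=
  forall g h : V,
    bch (RR g) (RR h) = RR (bch g (bch (bch (RR g) h) (ginv (RR g)))).

Definition frakR (R : V -> V) (x : V) : V :=
  R x - 2%:R^-1 *: R (br (R x) x)
    + 12%:R^-1 *: R (br (br (R x) x) x + br (R x) (br (R x) x))
    + 4%:R^-1 *: R (br (R (br (R x) x)) x).

End Lie.

(* The Rota-Baxter identity says that R is a Lie morphism from
   the descendent bracket [x, y]_R = [R x, y] + [x, R y] + [x, y] to [., .],
   hence a morphism between the corresponding BCH products; moreover
   frakR = R \o phiR.  It therefore suffices to show
     phiR g *_R phiR h = phiR (g * R (phiR g) * h * R (phiR g)^-1)
   in the Lie algebra.  Both sides are Lie polynomials in g, h and R with rational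
   coefficients, and their difference vanishes modulo antisymmetry, the Jacobi
   identity, the Rota-Baxter identity and g^4 = 0 (R preserves the lower
   central series, so every bracket of total degree >= 4 is zero). *)

From HB Require Import structures.
From mathcomp Require Import all_boot all_order all_algebra.
Set Implicit Arguments. Unset Strict Implicit. Unset Printing Implicit Defensive.
Import GRing.Theory.
Local Open Scope ring_scope.

Lemma ratr0 (K : unitRingType) : ratr 0 = 0 :> K.
Proof. exact: (ratr_nat K 0). Qed.

Lemma ratr1 (K : unitRingType) : ratr 1 = 1 :> K.
Proof. exact: (ratr_nat K 1). Qed.

Lemma ratrN1 (K : unitRingType) : ratr (-1) = -1 :> K.
Proof. exact: (ratr_int K (-1)). Qed.

(* rat.v makes ratr a ring morphism only into a numFieldType. *)
Section RatrPchar0.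
Variables (K : fieldType) (hK : [pchar K] =i pred0).

Lemma intr_pchar0_eq0 (z : int) : (z%:~R == 0 :> K) = (z == 0).
Proof.
have natr_eq0 := (pcharf0P K).1 hK.
by case: z => n; rewrite ?NegzE ?mulrNz ?oppr_eq0 natr_eq0.
Qed.

Lemma ratr_frac (a b : int) :
  b != 0 -> ratr (a%:~R / b%:~R) = a%:~R / b%:~R :> K.
Proof.
case: divqP => [_|k x k_neq0 _] //; rewrite !intrM -mulf_div divff ?mul1r //.
by rewrite intr_pchar0_eq0.
Qed.

Let denq_neq0K (x : rat) : (denq x)%:~R != 0 :> K.
Proof. by rewrite intr_pchar0_eq0 denq_neq0. Qed.

Let denq_neq0Q (x : rat) : (denq x)%:~R != 0 :> rat.
Proof. by rewrite intr_eq0 denq_neq0. Qed.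

Lemma ratrD (x y : rat) : ratr (x + y) = ratr x + ratr y :> K.
Proof.
rewrite -[x]divq_num_den -[y]divq_num_den addf_div // -!intrM -intrD.
rewrite ratr_frac ?mulf_neq0 ?denq_neq0 // /ratr !divq_num_den.
by rewrite addf_div // -!intrM -intrD.
Qed.

Lemma ratrM (x y : rat) : ratr (x * y) = ratr x * ratr y :> K.
Proof.
rewrite -[x]divq_num_den -[y]divq_num_den mulf_div -!intrM.
by rewrite ratr_frac ?mulf_neq0 ?denq_neq0 // /ratr !divq_num_den mulf_div -!intrM.
Qed.

Lemma ratrVn (n : nat) : ratr n%:R^-1 = n%:R^-1 :> K.
Proof.
case: n => [|n]; first by rewrite !invr0 ratr0.
by rewrite -div1r (@ratr_frac 1 n.+1) // div1r.
Qed.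

End RatrPchar0.

Section LinearMap.
Variables (K : fieldType) (V : lmodType K) (f : V -> V).
Hypothesis hf : linear_map f.

Lemma linear_mapD x y : f (x + y) = f x + f y.
Proof. by rewrite -[x]scale1r hf !scale1r. Qed.

Lemma linear_map0 : f 0 = 0.
Proof. by have := hf (-1) 0 0; rewrite !scaleN1r !addNr. Qed.

Lemma linear_mapZ a x : f (a *: x) = a *: f x.
Proof. by rewrite -[a *: x]addr0 hf linear_map0 addr0. Qed.

Lemma linear_mapN x : f (- x) = - f x.
Proof. by rewrite -scaleN1r linear_mapZ scaleN1r. Qed.

Lemma bch_morph (br1 br2 : V -> V -> V) :
    (forall x y, f (br1 x y) = br2 (f x) (f y)) ->
  forall x y, f (bch br1 x y) = bch br2 (f x) (f y).
Proof.
by move=> fbr x y; rewrite /bch !linear_mapD !linear_mapZ linear_mapD !fbr.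
Qed.

End LinearMap.

Section LieAlgebra.
Variables (K : fieldType) (V : lmodType K) (br : V -> V -> V).
Hypothesis hL : lie_bracket br.

Lemma linear_brl z : linear_map (br^~ z).
Proof. by case: hL => brZDl _ _ _ a x y; apply: brZDl. Qed.

Lemma linear_brr x : linear_map (br x).
Proof. by case: hL => _ brZDr _ _ a y z; apply: brZDr. Qed.

Lemma brxx x : br x x = 0. Proof. by case: hL. Qed.

Lemma jacobi x y z : br x (br y z) + br y (br z x) + br z (br x y) = 0.
Proof. by case: hL. Qed.

Lemma brDl x y z : br (x + y) z = br x z + br y z.
Proof. exact: (linear_mapD (linear_brl z) x y). Qed.

Lemma brDr x y z : br x (y + z) = br x y + br x z.
Proof. exact: (linear_mapD (linear_brr x) y z). Qed.

Lemma br0r x : br x 0 = 0.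
Proof. exact: linear_map0 (linear_brr x). Qed.

Lemma brZr a x y : br x (a *: y) = a *: br x y.
Proof. exact: (linear_mapZ (linear_brr x) a y). Qed.

Lemma brNr x y : br x (- y) = - br x y.
Proof. exact: (linear_mapN (linear_brr x) y). Qed.

Lemma brC x y : br x y = - br y x.
Proof.
apply/eqP; rewrite -addr_eq0; apply/eqP.
by have := brxx (x + y); rewrite brDl !brDr !brxx add0r addr0.
Qed.

Lemma br_brE x a b : br x (br a b) = br b (br a x) - br a (br b x).
Proof.
move/eqP: (jacobi x a b); rewrite -addrA addr_eq0 => /eqP ->.
by rewrite (brC a x) brNr opprD addrC.
Qed.

Local Notation lcs := (lcs br).

Lemma lcsN n x : lcs n x -> lcs n (- x).
Proof.
by case: n => [|n] Hx; [inversion Hx | rewrite -scaleN1r; apply: lcs_scale].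
Qed.

Lemma lcs_brl n x y : lcs n x -> lcs n.+1 (br x y).
Proof. by move=> Hx; rewrite brC; apply/lcsN/lcs_br. Qed.

Lemma lcs_br_lcs i j x y : lcs i x -> lcs j y -> lcs (i + j) (br x y).
Proof.
move=> Hx Hy; elim: Hy i x Hx => {j y} [y|j a b _ IH|j|j y z _ IHy _ IHz|j k y _ IH]
  i x Hx; rewrite ?addnS.
- by rewrite addn0; apply: lcs_brl.
- rewrite br_brE; apply: lcs_add.
    by rewrite brC -addSn; apply/lcsN/IH/lcs_br.
  by apply/lcsN/lcs_br; rewrite brC; apply/lcsN/IH.
- by rewrite br0r; apply: lcs_zero.
- by rewrite brDr; apply: lcs_add; rewrite -addnS; [apply: IHy | apply: IHz].
- by rewrite brZr; apply: lcs_scale; rewrite -addnS; apply: IH.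
Qed.

Lemma lcsW n x : lcs n.+2 x -> lcs n.+1 x.
Proof.
move En2 : n.+2 => m Hx; elim: Hx n En2 => {m x}
  [x|m a b Hb IH|m|m x y _ IHx _ IHy|m k x _ IH] n // [Em]; subst m.
- by case: n IH Hb => [|n] IH Hb; [apply: lcs_one | apply/lcs_br/IH].
- exact: lcs_zero.
- by apply: lcs_add; [apply: IHx | apply: IHy].
- by apply/lcs_scale/IH.
Qed.

Lemma lcs_leq m n x : (0 < m <= n)%N -> lcs n x -> lcs m x.
Proof.
case: m => // m /= /subnK <-; elim: (n - m.+1)%N => // k IH.
by rewrite addSn addnS => /lcsW; rewrite -addnS.
Qed.

End LieAlgebra.

Section RotaBaxter.
Variables (K : fieldType) (V : lmodType K) (br : V -> V -> V) (R : V -> V).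
Hypotheses (hL : lie_bracket br) (hRlin : linear_map R) (hRB : rota_baxter1 br R).

Definition brR x y := br (R x) y + br x (R y) + br x y.

Lemma R_brR x y : R (brR x y) = br (R x) (R y).
Proof. by rewrite hRB. Qed.

Lemma R_br_R x y : R (br x (R y)) = br (R x) (R y) + R (br y (R x)) - R (br x y).
Proof.
rewrite hRB !(linear_mapD hRlin) (brC hL y) (linear_mapN hRlin).
by rewrite addrAC addrK [R (br (R x) y) + _]addrC addrK.
Qed.

Definition phiR x := x - 2%:R^-1 *: br (R x) x
  + 12%:R^-1 *: (br (br (R x) x) x + br (R x) (br (R x) x))
  + 4%:R^-1 *: br (R (br (R x) x)) x.

Lemma frakR_phiR x : frakR br R x = R (phiR x).
Proof.
by rewrite /frakR /phiR !(linear_mapD hRlin, linear_mapZ hRlin, linear_mapN hRlin).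
Qed.

Hypothesis hnil : forall x, lcs br 4 x -> x = 0.
Hypotheses (hR2 : forall x, lcs br 2 x -> lcs br 2 (R x))
           (hR3 : forall x, lcs br 3 x -> lcs br 3 (R x)).

Lemma lcs_eq0 n x : (4 <= n)%N -> lcs br n x -> x = 0.
Proof. by move=> n_ge4 /(lcs_leq _) lcs4x; apply/hnil/lcs4x. Qed.

Lemma R_lcs n x : lcs br n x -> lcs br n (R x).
Proof.
case: n => [|[|[|[|n]]]] Hx; first by inversion Hx.
- exact: lcs_one.
- exact: hR2.
- exact: hR3.
- by rewrite (lcs_eq0 _ Hx) // (linear_map0 hRlin); apply: lcs_zero.
Qed.

End RotaBaxter.

Inductive mono := MVar of nat | MBr of mono & mono | MR of mono.

Fixpoint mono_eqb a b :=
  match a, b with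
  | MVar i, MVar j => i == j
  | MBr a1 a2, MBr b1 b2 => mono_eqb a1 b1 && mono_eqb a2 b2
  | MR a, MR b => mono_eqb a b
  | _, _ => false
  end.

Lemma mono_eqP : Equality.axiom mono_eqb.
Proof.
elim=> [i|a1 IH1 a2 IH2|a IH] [j|b1 b2|b] /=; try by constructor.
- by apply: (iffP eqP) => [->|[]].
- apply: (iffP andP) => [[/IH1 -> /IH2 ->] | [<- <-]] //.
  by split; [apply/IH1 | apply/IH2].
- by apply: (iffP (IH b)) => [->|[]].
Qed.

HB.instance Definition _ := hasDecEq.Build mono mono_eqP.

(* Since R preserves the lower central series, MR does not raise the degree. *)
Fixpoint mdeg m : nat :=
  match m with MVar _ => 1 | MBr a b => mdeg a + mdeg b | MR a => mdeg a end.

Fixpoint mono_cmp a b : comparison :=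
  match Nat.compare (mdeg a) (mdeg b) with
  | Eq =>
    match a, b with
    | MVar i, MVar j => Nat.compare i j
    | MVar _, _ => Lt
    | _, MVar _ => Gt
    | MR x, MR y => mono_cmp x y
    | MR _, MBr _ _ => Lt
    | MBr _ _, MR _ => Gt
    | MBr x1 x2, MBr y1 y2 =>
      if mono_cmp x1 y1 is Eq then mono_cmp x2 y2 else mono_cmp x1 y1
    end
  | c => c
  end.

Definition mono_lt a b := if mono_cmp a b is Lt then true else false.

Definition lpoly := seq (rat * mono).

Definition pscale (c : rat) (p : lpoly) : lpoly := [seq (c * cm.1, cm.2) | cm <- p].

Fixpoint pbind (f : mono -> lpoly) (p : lpoly) : lpoly :=
  if p is (c, m) :: p' then pscale c (f m) ++ pbind f p' else [::].

Fixpoint pinsert c m (p : lpoly) : lpoly :=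
  match p with
  | [::] => [:: (c, m)]
  | (c', m') :: p' =>
    if m == m' then (c + c', m) :: p' else (c', m') :: pinsert c m p'
  end.

Definition pcollect (p : lpoly) : lpoly :=
  foldr (fun cm => pinsert cm.1 cm.2) [::] p.

(* The rewriting rules below are sound whatever the order mono_lt; it only
   steers them towards normal forms. *)
Definition br_jacobi x y : lpoly :=
  if y is MBr a b then
    if [&& mdeg x == 1, mdeg y == 2 & mono_lt b x]%N
    then [:: (1, MBr b (MBr a x)); (-1, MBr a (MBr b x))]
    else [:: (1, MBr x y)]
  else [:: (1, MBr x y)].

Definition br_mono a b : lpoly :=
  if (4 <= mdeg a + mdeg b)%N then [::]
  else if a == b then [::]
  else if mono_lt b a then pscale (-1) (br_jacobi b a) else br_jacobi a b.

(* The Rota-Baxter identity used as a rewrite rule for R [x_i, R x_j], i < j. *)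
Definition R_mono m : lpoly :=
  if m is MBr (MVar i) (MR (MVar j)) then
    if (i < j)%N then
      [:: (1, MBr (MR (MVar i)) (MR (MVar j))); (1, MR (MBr (MVar j) (MR (MVar i))));
          (-1, MR (MBr (MVar i) (MVar j)))]
    else [:: (1, MR m)]
  else [:: (1, MR m)].

Definition pbr (p q : lpoly) : lpoly := pbind (fun m => pbind (br_mono m) q) p.

Inductive expr :=
  | EVar of nat | EBr of expr & expr | ER of expr
  | EAdd of expr & expr | EOpp of expr | EScaleInv of nat & expr.

Fixpoint nf e : lpoly :=
  match e with
  | EVar n => [:: (1, MVar n)]
  | EBr a b => pbr (nf a) (nf b)
  | ER a => pbind R_mono (nf a)
  | EAdd a b => nf a ++ nf b
  | EOpp a => pscale (-1) (nf a)
  | EScaleInv n a => pscale n%:R^-1 (nf a)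
  end.

(* A sound but incomplete test for e1 = e2. *)
Definition expr_eqb e1 e2 :=
  all (fun cm => cm.1 == 0) (pcollect (nf (EAdd e1 (EOpp e2)))).

Section Reflection.
Variables (K : fieldType) (V : lmodType K) (br : V -> V -> V) (R : V -> V).
Variable env : nat -> V.

Fixpoint mono_eval m :=
  match m with
  | MVar n => env n
  | MBr a b => br (mono_eval a) (mono_eval b)
  | MR a => R (mono_eval a)
  end.

Fixpoint poly_eval (p : lpoly) :=
  if p is (c, m) :: p' then ratr c *: mono_eval m + poly_eval p' else 0.

Fixpoint expr_eval e :=
  match e with
  | EVar n => env n
  | EBr a b => br (expr_eval a) (expr_eval b)
  | ER a => R (expr_eval a)
  | EAdd a b => expr_eval a + expr_eval b
  | EOpp a => - expr_eval a
  | EScaleInv n a => n%:R^-1 *: expr_eval a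
  end.

Hypothesis hK : [pchar K] =i pred0.
Hypotheses (hL : lie_bracket br) (hnil : forall x, lcs br 4 x -> x = 0).
Hypotheses (hRlin : linear_map R) (hRB : rota_baxter1 br R).
Hypotheses (hR2 : forall x, lcs br 2 x -> lcs br 2 (R x))
           (hR3 : forall x, lcs br 3 x -> lcs br 3 (R x)).

Lemma poly_eval_cat p q : poly_eval (p ++ q) = poly_eval p + poly_eval q.
Proof. by elim: p => [|[c m] p IH] /=; rewrite ?add0r // IH addrA. Qed.

Lemma poly_evalZ c p : poly_eval (pscale c p) = ratr c *: poly_eval p.
Proof.
elim: p => [|[c' m] p IH] /=; first by rewrite scaler0.
by rewrite IH scalerDr (ratrM hK) scalerA.
Qed.

Lemma poly_eval_bind f F : linear_map F ->
    (forall m, poly_eval (f m) = F (mono_eval m)) ->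
  forall p, poly_eval (pbind f p) = F (poly_eval p).
Proof.
move=> linF fF; elim=> [|[c m] p IH] /=; first by rewrite (linear_map0 linF).
by rewrite poly_eval_cat poly_evalZ fF IH linF.
Qed.

Lemma pcollect_sound p : poly_eval (pcollect p) = poly_eval p.
Proof.
elim: p => [|[c m] p IH] //=; rewrite -IH.
elim: (pcollect p) => [|[c' m'] q IHq] //=.
case: eqP => [->|_] /=; first by rewrite (ratrD hK) scalerDl addrA.
by rewrite IHq addrCA.
Qed.

Lemma mono_eval_lcs m : lcs br (mdeg m) (mono_eval m).
Proof.
elim: m => [n|a IHa b IHb|a IHa] /=; first exact: lcs_one.
  exact: (lcs_br_lcs hL).
exact: (R_lcs hRlin hnil hR2 hR3).
Qed.

Lemma br_jacobi_sound x y :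
  poly_eval (br_jacobi x y) = br (mono_eval x) (mono_eval y).
Proof.
rewrite /br_jacobi; case: y => [n|a b|a] /=; rewrite ?ratr1 ?scale1r ?addr0 //.
case: ifP => _ /=; rewrite ratr1 scale1r ?addr0 //.
by rewrite ratrN1 scaleN1r -(br_brE hL).
Qed.

Lemma br_mono_sound a b :
  poly_eval (br_mono a b) = br (mono_eval a) (mono_eval b).
Proof.
rewrite /br_mono; case: ifP => [deg_ge4 | _].
  by apply/esym/(lcs_eq0 hnil deg_ge4)/(lcs_br_lcs hL); apply: mono_eval_lcs.
case: eqP => [-> | _]; first by rewrite (brxx hL).
case: ifP => _; last exact: br_jacobi_sound.
by rewrite poly_evalZ br_jacobi_sound ratrN1 scaleN1r -(brC hL).
Qed.

Lemma R_mono_sound m : poly_eval (R_mono m) = R (mono_eval m).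
Proof.
rewrite /R_mono; case: m => [n|[i|a1 a2|a1] b|a] /=;
  rewrite ?ratr1 ?scale1r ?addr0 //.
case: b => [j|b1 b2|[j|b1 b2|b1]] /=; rewrite ?ratr1 ?scale1r ?addr0 //.
case: ifP => _ /=; rewrite ?ratr1 ?ratrN1 ?scale1r ?scaleN1r ?addr0 //.
by rewrite [RHS](R_br_R hL hRlin hRB) addrA.
Qed.

Lemma nf_sound e : poly_eval (nf e) = expr_eval e.
Proof.
elim: e => [n|a IHa b IHb|a IHa|a IHa b IHb|a IHa|n a IHa] /=.
- by rewrite ratr1 scale1r addr0.
- rewrite -IHa -IHb; apply: (poly_eval_bind (linear_brl hL _)) => m.
  exact/(poly_eval_bind (linear_brr hL _))/br_mono_sound.
- by rewrite -IHa; apply/(poly_eval_bind hRlin)/R_mono_sound.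
- by rewrite poly_eval_cat IHa IHb.
- by rewrite poly_evalZ IHa ratrN1 scaleN1r.
- by rewrite poly_evalZ IHa (ratrVn hK).
Qed.

Lemma poly_eval_eq0 p : all (fun cm => cm.1 == 0) p -> poly_eval p = 0.
Proof.
by elim: p => [|[c m] p IH] //= /andP[/eqP -> /IH ->]; rewrite ratr0 scale0r addr0.
Qed.

Lemma expr_eqb_sound e1 e2 : expr_eqb e1 e2 -> expr_eval e1 = expr_eval e2.
Proof.
move=> /poly_eval_eq0; rewrite pcollect_sound nf_sound /=.
by move=> /eqP; rewrite subr_eq0 => /eqP.
Qed.

End Reflection.

Definition Ebch (ebr : expr -> expr -> expr) x y :=
  EAdd (EAdd (EAdd x y) (EScaleInv 2 (ebr x y)))
    (EScaleInv 12 (EAdd (ebr x (ebr x y)) (ebr y (ebr y x)))).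

Definition EbrR x y := EAdd (EAdd (EBr (ER x) y) (EBr x (ER y))) (EBr x y).

Definition EphiR x :=
  EAdd (EAdd (EAdd x (EOpp (EScaleInv 2 (EBr (ER x) x))))
    (EScaleInv 12 (EAdd (EBr (EBr (ER x) x) x) (EBr (ER x) (EBr (ER x) x)))))
    (EScaleInv 4 (EBr (ER (EBr (ER x) x)) x)).

Definition key_lhs := Ebch EbrR (EphiR (EVar 0)) (EphiR (EVar 1)).

Definition key_rhs :=
  let u := ER (EphiR (EVar 0)) in
  EphiR (Ebch EBr (EVar 0) (Ebch EBr (Ebch EBr u (EVar 1)) (EOpp u))).

Lemma key_identity_check : expr_eqb key_lhs key_rhs.
Proof. by vm_compute. Qed.

Lemma bchR_phiR (K : fieldType) (hK : [pchar K] =i pred0)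
  (V : lmodType K) (br : V -> V -> V) (hL : lie_bracket br)
  (hnil : forall x : V, lcs br 4 x -> x = 0)
  (R : V -> V) (hRlin : linear_map R) (hRB : rota_baxter1 br R)
  (hR2 : forall x : V, lcs br 2 x -> lcs br 2 (R x))
  (hR3 : forall x : V, lcs br 3 x -> lcs br 3 (R x)) (g h : V) :
  let u := R (phiR br R g) in
  bch (brR br R) (phiR br R g) (phiR br R h)
  = phiR br R (bch br g (bch br (bch br u h) (ginv u))).
Proof.
(* The two sides are convertible to the evaluations of key_lhs and key_rhs. *)
exact: (expr_eqb_sound (fun n => if n is 0 then g else h)
  hK hL hnil hRlin hRB hR2 hR3 key_identity_check).
Qed.

Theorem corollary4p24 (K : fieldType) (hK : [pchar K] =i pred0)
  (V : lmodType K) (br : V -> V -> V) (hL : lie_bracket br)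
  (hnil : forall x : V, lcs br 4 x -> x = 0)
  (R : V -> V) (hRlin : linear_map R) (hRB : rota_baxter1 br R)
  (hR2 : forall x : V, lcs br 2 x -> lcs br 2 (R x))
  (hR3 : forall x : V, lcs br 3 x -> lcs br 3 (R x)) :
  group_rota_baxter br (frakR br R).
Proof.
move=> g h; rewrite !(frakR_phiR br hRlin) -(bch_morph hRlin (R_brR hRB)).
by rewrite (bchR_phiR hK hL hnil hRlin hRB hR2 hR3).
Qed.
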